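(* Let $\mathcal{C}$ be a reversible chemical reaction network with species concentrations $x_1,\dots,x_n$, and let $G$ be its modified species--reaction graph (defined in the context). Run the edge-modification procedure described in the context on $G$, with an arbitrary fixed order on the reaction vertices and an arbitrary choice of the unmarked species vertex at each step. Then the procedure terminates, and it returns ''UnconditionallyBinomial'' if and only if $\mathcal{C}$ is unconditionally binomial, i.e. if and only if the steady state ideal $\langle p_1,\dots,p_n\rangle\subseteq\mathbb{Q}[k_{ij},x_1,\dots,x_n]$ (rate constants treated as indeterminates) is generated by binomials.
   Context: A reversible chemical reaction network (RCRN) consists of species $X_1,\dots,X_n$, complexes $C_1,\dots,C_s$ (each complex $C_i$ is a formal nonnegative integer combination $\sum_k y_{ik}X_k$, with monomial $m_i=\prod_k x_k^{y_{ik}}$), and a set of reversible reactions $C_i\rightleftharpoons C_j$ with $C_i\neq C_j$, each having forward rate constant $k_{ij}$ and reverse rate constant $k_{ji}$. Under mass-action kinetics, the binomial associated to the reaction $C_i\rightleftharpoons C_j$ is $b_{ij}=-k_{ij}m_i+k_{ji}m_j$, and the ODEs are $\dot x_k=p_k=\sum_{\text{reactions } C_i\rightleftharpoons C_j} c^{(k)}_{ij}b_{ij}$, where $c^{(k)}_{ij}=y_{ik}-y_{jk}$ is the difference between the stoichiometric coefficients of $X_k$ in the reactant and product complexes. The steady state ideal is $\langle p_1,\dots,p_n\rangle$; the rate constants $k_{ij}$ are treated as independent indeterminates, and the network is called unconditionally binomial if this ideal in $\mathbb{Q}[k_{ij},x_1,\dots,x_n]$ can be generated by binomials (polynomials with at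 most two terms). Modified species--reaction graph $G$: a bipartite graph with one species vertex for each species $X_k$ and one reaction vertex for each reversible reaction $C_i\rightleftharpoons C_j$ (each reversible pair counted once); there is an undirected edge between species vertex $X_k$ and reaction vertex $C_i\rightleftharpoons C_j$ exactly when $c^{(k)}_{ij}\neq 0$, and that edge carries the label $c^{(k)}_{ij}$. (Equivalently, $G$ encodes the binomial coefficient matrix, whose rows are indexed by species, columns by reactions, and entries are $c^{(k)}_{ij}$; edges correspond to nonzero entries.) For an edge $s$–$r$ write $c(s,r)$ for its current label. Procedure (Algorithm 1): Initially all species vertices are unmarked. Process the reaction vertices $r$ one at a time in a fixed order. For the current $r$, let $N(r)$ be the set of species vertices currently adjacent to $r$. If no vertex of $N(r)$ is unmarked, skip $r$. Otherwise choose an unmarked $cs\in N(r)$ and mark it; then for each $s'\in N(r)$ with $s'\neq cs$: set $\mu=-c(s',r)/c(cs,r)$; delete the edge $s'$–$r$; and for every reaction vertex $r'\neq r$ currently adjacent to $cs$: if $s'$ is adjacent to $r'$, replace its label by $c(cs,r')\mu+c(s',r')$ if this number is nonzero and delete the edge $s'$–$r'$ if it is zero; if $s'$ is not adjacent to $r'$, add the edge $s'$–$r'$ with label $c(cs,r')\mu$. After all reaction vertices have been processed, return ''UnconditionallyBinomial'' if every connected component of the final graph consists either of a single species vertex alone, or of exactly one species vertex and one reaction vertex joined by an edge; otherwise return ''NotUnconditionallyBinomial''. *)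

From HB Require Import structures.
From mathcomp Require Import all_boot all_order all_algebra.
From mathcomp Require Import mpoly.
Set Implicit Arguments. Unset Strict Implicit. Unset Printing Implicit Defensive.
Import Order.TTheory GRing.Theory Num.Theory.
Local Open Scope ring_scope.

(* n species X_0..X_{n-1}; m reversible reactions r : 'I_m, each given by   *)
(* its reactant complex [reac r] and product complex [prod r] (vectors of   *)
(* stoichiometric coefficients y_{ik}).  The complexes of the network are    *)
(* the complexes occurring in the reactions.                                 *)

Definition rcrn_wf (n m : nat) (reac prod : 'I_m -> 'I_n -> nat) : Prop :=
  (forall r, reac r <> prod r) /\
  (forall r r', r <> r' ->
     ~ (reac r = reac r' /\ prod r = prod r') /\
     ~ (reac r = prod r' /\ prod r = reac r')).

Definition coef (n m : nat) (reac prod : 'I_m -> 'I_n -> nat)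
  (k : 'I_n) (r : 'I_m) : int := (reac r k)%:Z - (prod r k)%:Z.

Definition polyR (n m : nat) := {mpoly rat[n + (m + m)]}.

Definition xvar (n m : nat) (k : 'I_n) : polyR n m := 'X_(lshift (m + m) k).
Definition kfw (n m : nat) (r : 'I_m) : polyR n m := 'X_(rshift n (lshift m r)).
Definition krv (n m : nat) (r : 'I_m) : polyR n m := 'X_(rshift n (rshift m r)).

Definition cmono (n m : nat) (y : 'I_n -> nat) : polyR n m :=
  \prod_(k < n) xvar m k ^+ y k.

Definition binom_r (n m : nat) (reac prod : 'I_m -> 'I_n -> nat) (r : 'I_m)
  : polyR n m :=
  - (kfw n r * cmono m (reac r)) + krv n r * cmono m (prod r).

Definition ss_poly (n m : nat) (reac prod : 'I_m -> 'I_n -> nat) (k : 'I_n)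
  : polyR n m :=
  \sum_(r < m) (coef reac prod k r)%:~R * binom_r reac prod r.

Definition in_ideal (R : comRingType) (S : R -> Prop) (p : R) : Prop :=
  exists l : seq (R * R),
    (forall q, q \in l -> S q.2) /\ p = \sum_(q <- l) q.1 * q.2.

Definition is_binomial (N : nat) (p : {mpoly rat[N]}) : Prop :=
  (size (msupp p) <= 2)%N.

Definition unconditionally_binomial (n m : nat)
  (reac prod : 'I_m -> 'I_n -> nat) : Prop :=
  exists S : polyR n m -> Prop,
    (forall q, S q -> is_binomial q) /\
    (forall p, in_ideal S p <->
               in_ideal (fun q => exists k, q = ss_poly reac prod k) p).

(* A graph state is a label matrix L : 'M[rat]_(n,m) with the convention     *)
(* that there is an edge s -- r iff L s r != 0 (and its label is L s r),     *)
(* together with the set of marked species vertices.                         *)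

Definition gstate (n m : nat) := ('M[rat]_(n, m) * {set 'I_n})%type.

Definition init_state (n m : nat) (reac prod : 'I_m -> 'I_n -> nat)
  : gstate n m :=
  (\matrix_(s < n, r < m) (coef reac prod s r)%:~R, set0).

Definition nbr (n m : nat) (L : 'M[rat]_(n, m)) (r : 'I_m) : {set 'I_n} :=
  [set s | L s r != 0].

(* the edge modifications performed when processing r with chosen cs.      *)
(* For every s' in N(r), s' <> cs:  mu = - c(s',r)/c(cs,r); the edge s'--r   *)
(* is deleted; for every r' <> r adjacent to cs, the edge s'--r' gets label *)
(* c(cs,r') mu + c(s',r') if it existed (deleted when this is 0), or is     *)
(* created with label c(cs,r') mu otherwise.  (Distinct s' touch disjoint    *)
(* rows and only read row cs and their own row, so they commute.)            *)
Definition process_with (n m : nat) (L : 'M[rat]_(n, m)) (r : 'I_m)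
  (cs : 'I_n) : 'M[rat]_(n, m) :=
  \matrix_(s' < n, r' < m)
    if (s' \in nbr L r) && (s' != cs) then
      let mu := - L s' r / L cs r in
      if r' == r then 0
      else if L cs r' != 0 then
        (if L s' r' != 0 then L cs r' * mu + L s' r' else L cs r' * mu)
      else L s' r'
    else L s' r'.

Definition alg_step (n m : nat) (r : 'I_m) (st st' : gstate n m) : Prop :=
  let: (L, mk) := st in
  ((nbr L r :\: mk == set0) /\ st' = st) \/
  (exists cs, cs \in nbr L r /\ cs \notin mk /\
              st' = (process_with L r cs, cs |: mk)).

Fixpoint alg_run (n m : nat) (ord : seq 'I_m) (st st' : gstate n m) : Prop :=
  match ord with
  | [::] => st' = st
  | r :: o => exists st1, alg_step r st st1 /\ alg_run o st1 st'
  end.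

Definition gvert (n m : nat) := ('I_n + 'I_m)%type.

Definition gadj (n m : nat) (L : 'M[rat]_(n, m)) : rel (gvert n m) :=
  fun u v => match u, v with
             | inl s, inr r => L s r != 0
             | inr r, inl s => L s r != 0
             | _, _ => false
             end.

Definition gcomp (n m : nat) (L : 'M[rat]_(n, m)) (v : gvert n m)
  : {set gvert n m} := [set w | connect (gadj L) v w].

Definition returns_UB (n m : nat) (L : 'M[rat]_(n, m)) : Prop :=
  forall v : gvert n m,
    (exists s : 'I_n, gcomp L v = [set inl s]) \/
    (exists (s : 'I_n) (r : 'I_m), L s r != 0 /\ gcomp L v = [set inl s; inr r]).

(* Both sides of the equivalence are shown to be equivalent to one linear-algebra
   condition on the coefficient matrix C = (c_kr) (rows = species, columns =
   reactions): C is row full, i.e. has rank m, i.e. every unit row vector e_r is a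
   rational combination of the rows of C.
   - Algorithm 1 is Gaussian elimination: processing r with pivot cs adds to each
     row a multiple of row cs, an invertible left multiplication, so the rank of
     the label matrix never changes and a run always exists.  If C is row full,
     no reaction vertex is ever skipped and processed columns stay unit columns
     at marked pivots; the final graph then has only isolated species and single
     edges.  Conversely such a final graph is row full.
   - If C is row full, b_r = sum_k a_rk p_k, so the binomials b_r generate the
     steady-state ideal.  Conversely, specializing x to 1, one rate constant i to
     X and the others to 0 reads off from a combination sum_k a_k p_k the weights
     w_r = sum_k a_k(base point) c_kr; a binomial generator can have only one
     nonzero weight, and writing each p_k through binomial generators gives e_r
     as a combination of rows of C. *)
From HB Require Import structures.
From mathcomp Require Import all_boot all_order all_algebra.
From mathcomp Require Import mpoly.
From Stdlib Require Import FunctionalExtensionality.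
Set Implicit Arguments. Unset Strict Implicit. Unset Printing Implicit Defensive.
Import Order.TTheory GRing.Theory Num.Theory.
Local Open Scope ring_scope.

Section Elimination.
Variables n m : nat.
Implicit Types (L : 'M[rat]_(n, m)) (st : gstate n m).

Lemma row_full_coefP L : row_full L <->
  forall r, exists a : 'I_n -> rat, forall r', \sum_s a s * L s r' = (r == r')%:R.
Proof.
split => [/row_fullP [B BL] r | unit_combs].
  by exists (B r) => r'; move/matrixP: BL => /(_ r r'); rewrite !mxE.
rewrite -sub1mx; apply/row_subP => r; rewrite row1; apply/submxP.
have [a a_inv] := unit_combs r; exists (\row_s a s); apply/rowP => r'.
by rewrite !mxE eq_sym -a_inv; apply: eq_bigr => s _; rewrite mxE.
Qed.

(* Adding to each row s the multiple c s of a pivot row cs (with c cs = 0) is a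
   left multiplication by an invertible matrix, hence preserves the rank. *)
Lemma rank_add_pivot_row L (cs : 'I_n) (c : 'I_n -> rat) : c cs = 0 ->
  \rank (\matrix_(s, r) (L s r + c s * L cs r)) = \rank L.
Proof.
move=> c_cs; set N := \col_s c s *m delta_mx 0 cs.
have NN : N *m N = 0.
  rewrite /N mulmxA -(mulmxA _ (delta_mx _ _)) -rowE.
  have -> : row cs (\col_s c s) = 0 by apply/rowP => i; rewrite !mxE c_cs.
  by rewrite mulmx0 mul0mx.
have -> : \matrix_(s, r) (L s r + c s * L cs r) = (1%:M + N) *m L.
  apply/matrixP => s r; rewrite mulmxDl mul1mx /N -mulmxA -rowE !mxE big_ord1.
  by rewrite !mxE.
rewrite eqmxMfull //; apply/row_fullP; exists (1%:M - N).
by rewrite mulmxDr mulmx1 mulmxBl mul1mx NN subr0 addrNK.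
Qed.

Definition elim_coef L (r : 'I_m) (cs s : 'I_n) : rat :=
  if (s \in nbr L r) && (s != cs) then - L s r / L cs r else 0.

Lemma process_withE L r cs : L cs r != 0 ->
  process_with L r cs = \matrix_(s, r') (L s r' + elim_coef L r cs s * L cs r').
Proof.
move=> Lcs; apply/matrixP => s r'; rewrite !mxE /elim_coef.
case: ifP => _; last by rewrite mul0r addr0.
have [->|_] := eqVneq r' r; first by rewrite divfK // addrN.
have [->|_] /= := eqVneq (L cs r') 0; first by rewrite mulr0 addr0.
by have [->|_] /= := eqVneq (L s r') 0; rewrite ?add0r mulrC // addrC.
Qed.

Lemma elim_coef_pivot L r cs : elim_coef L r cs cs = 0.
Proof. by rewrite /elim_coef eqxx andbF. Qed.

Lemma alg_step_rank r st st' : alg_step r st st' -> \rank st'.1 = \rank st.1.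
Proof.
case: st => L mk [[_ ->] // | [cs [Ncs [_ ->]]]] /=.
rewrite inE in Ncs; rewrite process_withE //.
exact/rank_add_pivot_row/elim_coef_pivot.
Qed.

Lemma alg_run_rank ord st st' : alg_run ord st st' -> \rank st'.1 = \rank st.1.
Proof.
elim: ord st => [|r o IH] st /=; first by move=> ->.
by move=> [st1 [step run]]; rewrite (IH _ run) (alg_step_rank step).
Qed.

Lemma alg_run_exists ord st : exists st', alg_run ord st st'.
Proof.
elim: ord st => [|r o IH] [L mk] /=; first by exists (L, mk).
have [no_unmarked | /set0Pn [cs]] := boolP (nbr L r :\: mk == set0).
  by have [st' run] := IH (L, mk); exists st', (L, mk); split => //; left.
rewrite inE => /andP [cs_mk Ncs].
have [st' run] := IH (process_with L r cs, cs |: mk).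
by exists st', (process_with L r cs, cs |: mk); split => //; right; exists cs.
Qed.

Definition unit_col L (r : 'I_m) (s : 'I_n) : Prop :=
  L s r != 0 /\ forall s', s' != s -> L s' r = 0.

Lemma combination_unit_col L (a : 'I_n -> rat) r s : unit_col L r s ->
  \sum_t a t * L t r = a s * L s r.
Proof.
move=> [_ col0]; rewrite (bigD1 s) //= big1 ?addr0 // => t ts.
by rewrite col0 // mulr0.
Qed.

Lemma unit_col_inj L r r' s : row_full L -> unit_col L r s -> unit_col L r' s ->
  r' = r.
Proof.
move=> /row_full_coefP /(_ r) [a a_inv] col_r col_r'.
have := a_inv r; rewrite (combination_unit_col _ col_r) eqxx.
apply: contra_eq => r'r; move: (a_inv r').
rewrite (combination_unit_col _ col_r') eq_sym (negbTE r'r) => /eqP.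
by rewrite mulf_eq0 (negbTE col_r'.1) orbF => /eqP ->; rewrite mul0r eq_sym oner_eq0.
Qed.

(* Invariant of a run after processing the reaction vertices in [done]: each
   processed column is a unit column at a marked species, and each marked
   species is adjacent to some processed reaction. *)
Definition pivoted (done : seq 'I_m) st : Prop :=
  (forall r, r \in done -> exists2 s, s \in st.2 & unit_col st.1 r s) /\
  (forall s, s \in st.2 -> exists2 r, r \in done & st.1 s r != 0).

(* In a pivoted row-full state, an unprocessed reaction vertex has an unmarked
   neighbour: otherwise its unit row vector could not be reached. *)
Lemma unmarked_neighbour done L (mk : {set 'I_n}) r : row_full L -> pivoted done (L, mk) ->
  r \notin done -> exists cs, cs \in nbr L r :\: mk.
Proof.
move=> /row_full_coefP /(_ r) [a a_inv] [done_col mk_row] r_new.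
apply/set0Pn; apply: contraTneq isT => /setP N_mk; move: (a_inv r).
rewrite eqxx big1 => [/esym/eqP|s _]; first by rewrite oner_eq0.
have [-> | Lsr] := eqVneq (L s r) 0; first by rewrite mulr0.
have s_mk : s \in mk by move: (N_mk s); rewrite !inE Lsr andbT => /negbFE.
have [r1 r1_done Lsr1] := mk_row s s_mk; have [s1 _ col1] := done_col r1 r1_done.
have -> : s = s1 by apply: contraNeq Lsr1 => ss1; rewrite col1.2.
have := a_inv r1; rewrite (combination_unit_col _ col1).
have -> : (r == r1) = false by apply: contraNF r_new => /eqP ->.
by move/eqP; rewrite mulf_eq0 (negbTE col1.1) orbF => /eqP ->; rewrite mul0r.
Qed.

Lemma process_col_unchanged L r cs r1 : L cs r != 0 -> L cs r1 = 0 ->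
  forall t, process_with L r cs t r1 = L t r1.
Proof. by move=> Lcs L0 t; rewrite process_withE // mxE L0 mulr0 addr0. Qed.

Lemma process_col_pivot L r cs : L cs r != 0 -> unit_col (process_with L r cs) r cs.
Proof.
move=> Lcs; rewrite process_withE //; split; first by rewrite mxE elim_coef_pivot mul0r addr0.
move=> s scs; rewrite mxE /elim_coef scs andbT inE.
by case: eqP => [-> | _] /=; rewrite ?mul0r ?addr0 // divfK // addrN.
Qed.

Lemma pivoted_process done L (mk : {set 'I_n}) r cs : cs \in nbr L r -> cs \notin mk ->
  pivoted done (L, mk) -> pivoted (rcons done r) (process_with L r cs, cs |: mk).
Proof.
rewrite inE => Lcs cs_mk [done_col mk_row].
have old r1 : r1 \in done -> forall t, process_with L r cs t r1 = L t r1.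
  move=> r1_done; apply: process_col_unchanged => //.
  have [s1 s1_mk [_ col1]] := done_col r1 r1_done.
  by apply: col1; apply: contraNneq cs_mk => ->.
split => /= [r1 | s].
  rewrite mem_rcons inE => /predU1P [-> | r1_done].
    by exists cs; [rewrite setU11 | exact: process_col_pivot].
  have [s1 s1_mk [Ls1 col1]] := done_col r1 r1_done.
  exists s1; first by rewrite setU1r.
  by split => [|s' s's1]; rewrite old // col1.
rewrite in_setU1 => /predU1P [-> | s_mk].
  exists r; first by rewrite mem_rcons mem_head.
  by have [] := process_col_pivot Lcs.
have [r1 r1_done Lsr1] := mk_row s s_mk.
by exists r1; rewrite ?mem_rcons ?inE ?r1_done ?orbT ?old.
Qed.

Lemma pivoted_step done r st st' : row_full st.1 -> r \notin done ->
  pivoted done st -> alg_step r st st' -> pivoted (rcons done r) st'.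
Proof.
case: st => L mk /= full r_new inv [[no_unmarked _] | [cs [Ncs [cs_mk ->]]]].
  have [cs] := unmarked_neighbour full inv r_new.
  by rewrite (eqP no_unmarked) inE.
exact: pivoted_process.
Qed.

Lemma pivoted_run done ord st st' : row_full st.1 -> uniq (done ++ ord) ->
  pivoted done st -> alg_run ord st st' -> pivoted (done ++ ord) st'.
Proof.
elim: ord done st => [|r o IH] done st /=; first by rewrite cats0 => _ _ inv ->.
move=> full uniq_ord inv [st1 [step run]].
have r_new : r \notin done.
  by move: uniq_ord; rewrite cat_uniq /= => /and4P [_ /norP []].
rewrite -cat_rcons; apply: IH run.
- by rewrite /row_full (alg_step_rank step).
- by rewrite cat_rcons.
- exact: pivoted_step step.
Qed.

Lemma gcomp_eq L v (A : {set gvert n m}) : v \in A ->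
  (forall x y, gadj L x y -> (x \in A) = (y \in A)) ->
  (forall w, w \in A -> connect (gadj L) v w) -> gcomp L v = A.
Proof.
move=> vA closedA reachA; apply/setP => w; rewrite inE.
by apply/idP/idP => [vw | /reachA //]; rewrite -(closed_connect closedA vw).
Qed.

Lemma gcomp_edge L s r : L s r != 0 -> (forall r', L s r' != 0 -> r' = r) ->
  (forall s', L s' r != 0 -> s' = s) ->
  forall v, v \in [set inl s; inr r] -> gcomp L v = [set inl s; inr r].
Proof.
move=> Lsr row_s col_r v v_edge; apply: gcomp_eq => //.
  have same_end s' r' : L s' r' != 0 -> (s' == s) = (r' == r).
    by move=> L'; apply/eqP/eqP => e; [apply: row_s | apply: col_r]; rewrite -e.
  by move=> [s'|r'] [s''|r''] //= L'; rewrite !inE /eq_op /= orbF (same_end _ _ L').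
have sr : connect (gadj L) (inl s) (inr r) by apply: connect1.
have rs : connect (gadj L) (inr r) (inl s) by apply: connect1.
by move: v_edge; rewrite !inE => /orP [] /eqP -> w; rewrite !inE => /orP [] /eqP ->.
Qed.

Lemma returns_UB_unit_cols L : row_full L -> (forall r, exists s, unit_col L r s) ->
  returns_UB L.
Proof.
move=> full unit_cols.
have col_of s r : L s r != 0 -> unit_col L r s.
  move=> Lsr; have [s1 col1] := unit_cols r.
  by have -> : s = s1 by apply: contraNeq Lsr => ss1; rewrite col1.2.
have edge_comp s r : L s r != 0 -> forall v, v \in [set inl s; inr r] ->
    gcomp L v = [set inl s; inr r].
  move=> Lsr; apply: gcomp_edge => // [r' Lsr' | s' Ls'r].
    exact: unit_col_inj full (col_of _ _ Lsr) (col_of _ _ Lsr').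
  by apply: contraNeq Ls'r => s's; rewrite (col_of _ _ Lsr).2.
case=> [s | r]; last first.
  have [s col_s] := unit_cols r; right; exists s, r; split; first exact: col_s.1.
  by apply: edge_comp; [exact: col_s.1 | rewrite !inE eqxx orbT].
have [r Lsr | row0] := pickP (fun r => L s r != 0).
  by right; exists s, r; split => //; apply: edge_comp; rewrite ?inE ?eqxx.
left; exists s; apply: gcomp_eq => [| x y | w /set1P -> //]; first by rewrite inE.
by case: x y => [s'|r'] [s''|r''] //= L'; rewrite !inE /eq_op /=;
  [|symmetry]; apply: contraNF L' => /eqP ->; exact/negbFE/row0.
Qed.

(* Conversely, if the output is "UnconditionallyBinomial" then each reaction r
   is the only neighbour of some species s, so e_r is a multiple of row s. *)
Lemma row_full_returns_UB L : returns_UB L -> row_full L.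
Proof.
move=> UB; apply/row_full_coefP => r.
have r_comp : inr r \in gcomp L (inr r) by rewrite inE.
have [[s compE] | [s [r0 [Lsr0 compE]]]] := UB (inr r).
  by move: r_comp; rewrite compE inE.
move: r_comp; rewrite compE => /set2P [/eqP // | [r0E]]; subst r0.
have row_s r' : L s r' != 0 -> r' = r.
  move=> Lsr'; have : inr r' \in gcomp L (inr r).
    by rewrite inE (connect_trans (y := inl s)) ?connect1.
  by rewrite compE => /set2P [/eqP // | [->]].
exists (fun t => (t == s)%:R / L s r) => r'.
rewrite (bigD1 s) //= eqxx mul1r big1 ?addr0 => [|t /negbTE ->]; last by rewrite !mul0r.
have [<- | rr'] := eqVneq r r'; first by rewrite mulVf.
apply/eqP; rewrite mulf_eq0 invr_eq0 (negbTE Lsr0) /=.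
by apply: contraNT rr' => /row_s ->.
Qed.

Lemma alg_run_returns_UB L ord st' : perm_eq ord (enum 'I_m) ->
  alg_run ord (L, set0) st' -> returns_UB st'.1 <-> row_full L.
Proof.
move=> ord_perm run.
have full_eq : row_full st'.1 = row_full L by rewrite /row_full (alg_run_rank run).
split => [/row_full_returns_UB | full]; first by rewrite full_eq.
have inv0 : pivoted [::] (L, set0) by split => // s; rewrite inE.
have uniq_ord : uniq ([::] ++ ord) by rewrite (perm_uniq ord_perm) enum_uniq.
have [done_col _] := pivoted_run (st := (L, set0)) full uniq_ord inv0 run.
apply: returns_UB_unit_cols; first by rewrite full_eq.
move=> r; have [|s _ col_s] := done_col r; last by exists s.
by rewrite (perm_mem ord_perm) mem_enum.
Qed.
End Elimination.

Section Ideal.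
Variable T : comNzRingType.
Implicit Types (S : T -> Prop) (p q : T).

Lemma in_ideal0 S : in_ideal S 0.
Proof. by exists [::]; rewrite big_nil. Qed.

Lemma in_idealD S p q : in_ideal S p -> in_ideal S q -> in_ideal S (p + q).
Proof.
move=> [l1 [l1S ->]] [l2 [l2S ->]]; exists (l1 ++ l2); rewrite big_cat.
by split => // x; rewrite mem_cat => /orP [/l1S | /l2S].
Qed.

Lemma in_idealM S c p : in_ideal S p -> in_ideal S (c * p).
Proof.
move=> [l [lS ->]]; exists [seq (c * x.1, x.2) | x <- l]; split.
  by move=> x /mapP [y /lS ? ->].
by rewrite big_map mulr_sumr; apply: eq_bigr => x _; rewrite mulrA.
Qed.

Lemma in_ideal_gen S q : S q -> in_ideal S q.
Proof.
move=> Sq; exists [:: (1, q)]; rewrite big_seq1 mul1r.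
by split => // x; rewrite inE => /eqP ->.
Qed.

Lemma in_ideal_sum S I (s : seq I) (F : I -> T) :
  (forall i, in_ideal S (F i)) -> in_ideal S (\sum_(i <- s) F i).
Proof.
move=> SF; elim: s => [|x s IH]; first by rewrite big_nil; apply: in_ideal0.
by rewrite big_cons; apply: in_idealD.
Qed.

Lemma in_ideal_sub S S' p : (forall q, S q -> in_ideal S' q) ->
  in_ideal S p -> in_ideal S' p.
Proof.
move=> SS' [l [lS ->]]; rewrite big_seq; elim/big_rec: _ => [|x y xl IH].
  exact: in_ideal0.
exact/in_idealD/IH/in_idealM/SS'/lS.
Qed.

Lemma in_ideal_fin k (g : 'I_k -> T) p : in_ideal (fun q => exists i, q = g i) p ->
  exists a : 'I_k -> T, p = \sum_i a i * g i.
Proof.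
move=> [l [lg ->]]; elim: l lg => [|[c q] l IH] lg.
  by exists (fun=> 0); rewrite big_nil big1 // => i _; rewrite mul0r.
rewrite big_cons /=.
have [a ->] := IH (fun x xl => lg x (mem_behead (s := (c, q) :: l) xl)).
have [i0 /= ->] := lg (c, q) (mem_head _ _).
exists (fun i => a i + (i == i0)%:R * c); rewrite addrC.
under [RHS]eq_bigr do rewrite mulrDl; rewrite big_split /=; congr (_ + _).
rewrite (bigD1 i0) //= eqxx mul1r big1 ?addr0 // => i /negbTE ->.
by rewrite !mul0r.
Qed.
End Ideal.

Section Binomiality.
Variables n m : nat.
Local Notation N := (n + (m + m))%N.
Local Notation R := (polyR n m).

Definition is_rate (j : 'I_N) : bool := (n <= j)%N.
Definition fwd_var (r : 'I_m) : 'I_N := rshift n (lshift m r).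
Definition rev_var (r : 'I_m) : 'I_N := rshift n (rshift m r).

Definition spec_var (i j : 'I_N) : {poly rat} :=
  if j == i then 'X else if is_rate j then 0 else 1.
Local Notation spec i := (mmap (@polyC rat) (spec_var i)).

Definition rate_free (mm : 'X_{1..N}) : bool :=
  [forall j, is_rate j ==> (mm j == 0%N)].
Definition rate_only_at (i : 'I_N) (mm : 'X_{1..N}) : bool :=
  [forall j, (is_rate j && (j != i)) ==> (mm j == 0%N)].

Lemma spec_monomial i mm : is_rate i ->
  mmap1 (spec_var i) mm = if rate_only_at i mm then 'X^(mm i) else 0.
Proof.
move=> rate_i; rewrite /mmap1 (bigD1 i) //= {1}/spec_var eqxx.
case: ifP => [only_i | /negbT]; last first.
  rewrite negb_forall => /existsP [j]; rewrite negb_imply => /andP [/andP [rate_j ji] mmj].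
  by rewrite (bigD1 j) //= /spec_var (negbTE ji) rate_j expr0n (negbTE mmj) mul0r mulr0.
rewrite big1 ?mulr1 // => j ji; rewrite /spec_var (negbTE ji).
case: ifP => rate_j; last by rewrite expr1n.
by move/forallP: only_i => /(_ j); rewrite rate_j ji => /eqP ->; rewrite expr0.
Qed.

(* The value of q at x = 1 and all rate constants 0. *)
Definition base_value (q : R) : rat :=
  \sum_(mm <- msupp q) q@_mm * (rate_free mm)%:R.

Lemma spec_coef0 i q : is_rate i -> (spec i q)`_0 = base_value q.
Proof.
move=> rate_i; rewrite coef_sum /base_value; apply: eq_bigr => mm _.
rewrite coefCM spec_monomial //; congr (_ * _); case: ifP => only_i.
  rewrite coefXn; congr (nat_of_bool _)%:R.
  apply/idP/forallP => [/eqP mm_i j | free].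
    apply/implyP => rate_j; have [-> | ji] := eqVneq j i; first by rewrite -mm_i.
    by move/forallP: only_i => /(_ j); rewrite rate_j ji.
  by rewrite eq_sym (implyP (free i)).
rewrite coef0; apply/esym/eqP; rewrite pnatr_eq0 eqb0; apply: contraFN only_i.
by move=> /forallP free; apply/forallP => j; apply/implyP => /andP [/(implyP (free j))].
Qed.

Lemma spec_coef1 i q : is_rate i -> (spec i q)`_1 != 0 ->
  exists2 mm, mm \in msupp q & (mm i == 1%N) && rate_only_at i mm.
Proof.
move=> rate_i nz.
suff /hasP [mm mm_q mm_ok] :
    has (fun mm : 'X_{1..N} => (mm i == 1%N) && rate_only_at i mm) (msupp q).
  by exists mm.
apply: contraNT nz => /hasPn none; apply/eqP.
rewrite coef_sum big1_seq //= => mm mm_q; rewrite coefCM spec_monomial //.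
case: ifP => only_i; last by rewrite coef0 mulr0.
rewrite coefXn; case: eqP => [mm_i | _]; last by rewrite mulr0.
by move: (none mm mm_q); rewrite -mm_i eqxx only_i.
Qed.

Lemma three_rate_monomials q (i1 i2 i3 : 'I_N) :
  is_rate i1 -> is_rate i2 -> is_rate i3 -> i1 != i2 -> i1 != i3 -> i2 != i3 ->
  (spec i1 q)`_1 != 0 -> (spec i2 q)`_1 != 0 -> (spec i3 q)`_1 != 0 ->
  (2 < size (msupp q))%N.
Proof.
move=> rate1 rate2 rate3 i12 i13 i23 nz1 nz2 nz3.
have [m1 m1_q /andP [m1_i1 _]] := spec_coef1 rate1 nz1.
have [m2 m2_q /andP [m2_i2 only2]] := spec_coef1 rate2 nz2.
have [m3 m3_q /andP [_ only3]] := spec_coef1 rate3 nz3.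
have distinct (a b : 'X_{1..N}) (ia ib : 'I_N) : is_rate ia -> ia != ib ->
    a ia == 1%N -> rate_only_at ib b -> a != b.
  move=> rate_a iab a_ia /forallP /(_ ia); rewrite rate_a iab /=.
  by apply: contraTneq => <-; rewrite (eqP a_ia).
have uniq_m : uniq [:: m1; m2; m3].
  by rewrite /= !inE negb_or (distinct _ _ _ _ rate1 i12 m1_i1 only2)
    (distinct _ _ _ _ rate1 i13 m1_i1 only3) (distinct _ _ _ _ rate2 i23 m2_i2 only3).
apply: (uniq_leq_size uniq_m) => x; rewrite !inE.
by case/or3P => /eqP ->.
Qed.

Lemma spec_combination (I : eqType) (s : seq I) i (a g : I -> R) : is_rate i ->
  {in s, forall k, (spec i (g k))`_0 = 0} ->
  (spec i (\sum_(k <- s) a k * g k))`_0 = 0 /\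
  (spec i (\sum_(k <- s) a k * g k))`_1 =
    \sum_(k <- s) base_value (a k) * (spec i (g k))`_1.
Proof.
move=> rate_i g0; rewrite rmorph_sum /= !coef_sum; split.
  by apply: big1_seq => k /andP [_ /g0 gk0]; rewrite rmorphM coef0M gk0 mulr0.
apply: eq_big_seq => k /g0 gk0.
rewrite rmorphM coefM big_ord_recr big_ord_recr big_ord0.
by rewrite /= gk0 mulr0 addr0 add0r spec_coef0.
Qed.

Variables reac prod : 'I_m -> 'I_n -> nat.
Local Notation Cmx := (init_state reac prod).1.

Lemma CmxE k r : Cmx k r = (coef reac prod k r)%:~R.
Proof. by rewrite mxE. Qed.

Lemma fwd_var_rate r : is_rate (fwd_var r).
Proof. exact: leq_addr. Qed.

Lemma rev_var_rate r : is_rate (rev_var r).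
Proof. exact: leq_addr. Qed.

Lemma fwd_rev_var_neq r r' : fwd_var r != rev_var r'.
Proof.
by rewrite -val_eqE /= eqn_add2l neq_ltn (leq_trans (ltn_ord r)) ?leq_addr.
Qed.

Lemma fwd_var_inj r r' : (fwd_var r == fwd_var r') = (r == r').
Proof. by rewrite -val_eqE /= eqn_add2l. Qed.

Lemma rev_var_inj r r' : (rev_var r == rev_var r') = (r == r').
Proof. by rewrite -val_eqE /= !eqn_add2l. Qed.

Lemma spec_cmono i y : is_rate i -> spec i (cmono m y) = 1.
Proof.
move=> rate_i; rewrite rmorph_prod big1 // => k _.
rewrite rmorphXn /= /xvar mmapX mmap1U /spec_var.
have [ki | _] := eqVneq (lshift (m + m) k) i.
  by move: rate_i; rewrite -ki /is_rate /= leqNgt ltn_ord.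
by rewrite /is_rate /= leqNgt ltn_ord expr1n.
Qed.

Lemma spec_binom_rev r0 r :
  spec (rev_var r0) (binom_r reac prod r) = if r == r0 then 'X else 0.
Proof.
rewrite rmorphD rmorphN !rmorphM /= !spec_cmono ?rev_var_rate // !mulr1.
rewrite /kfw /krv !mmapX !mmap1U -/(fwd_var r) -/(rev_var r) /spec_var.
rewrite (negbTE (fwd_rev_var_neq _ _)) fwd_var_rate rev_var_inj oppr0 add0r.
by case: eqP; rewrite ?rev_var_rate.
Qed.

Lemma spec_binom_fwd r0 r :
  spec (fwd_var r0) (binom_r reac prod r) = if r == r0 then - 'X else 0.
Proof.
rewrite rmorphD rmorphN !rmorphM /= !spec_cmono ?fwd_var_rate // !mulr1.
rewrite /kfw /krv !mmapX !mmap1U -/(fwd_var r) -/(rev_var r) /spec_var.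
rewrite (eq_sym (rev_var r)) (negbTE (fwd_rev_var_neq _ _)) rev_var_rate addr0 fwd_var_inj.
by case: eqP; rewrite ?fwd_var_rate ?oppr0.
Qed.

Lemma spec_ss_rev r0 k :
  spec (rev_var r0) (ss_poly reac prod k) = (Cmx k r0)%:P * 'X.
Proof.
rewrite rmorph_sum (bigD1 r0) //= big1 ?addr0 => [|r r_r0].
  by rewrite rmorphM /= rmorph_int spec_binom_rev eqxx CmxE -(rmorph_int (@polyC _)).
by rewrite rmorphM /= spec_binom_rev (negbTE r_r0) mulr0.
Qed.

Lemma spec_ss_fwd r0 k :
  spec (fwd_var r0) (ss_poly reac prod k) = - ((Cmx k r0)%:P * 'X).
Proof.
rewrite rmorph_sum (bigD1 r0) //= big1 ?addr0 => [|r r_r0].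
  by rewrite rmorphM /= rmorph_int spec_binom_fwd eqxx CmxE -(rmorph_int (@polyC _)) mulrN.
by rewrite rmorphM /= spec_binom_fwd (negbTE r_r0) mulr0.
Qed.

Definition weight (a : 'I_n -> R) (r : 'I_m) : rat := \sum_k base_value (a k) * Cmx k r.

Lemma spec_ss_combination (a : 'I_n -> R) r q :
  q = \sum_k a k * ss_poly reac prod k ->
  (spec (rev_var r) q)`_0 = 0 /\ (spec (rev_var r) q)`_1 = weight a r /\
  (spec (fwd_var r) q)`_1 = - weight a r.
Proof.
move=> ->.
have rev0 k : (spec (rev_var r) (ss_poly reac prod k))`_0 = 0.
  by rewrite spec_ss_rev coefMX.
have fwd0 k : (spec (fwd_var r) (ss_poly reac prod k))`_0 = 0.
  by rewrite spec_ss_fwd coefN coefMX oppr0.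
have [q_rev0 ->] := spec_combination (s := index_enum _) a (rev_var_rate r) (in1W rev0).
have [_ ->] := spec_combination (s := index_enum _) a (fwd_var_rate r) (in1W fwd0).
split => //; split.
  by apply: eq_bigr => k _; rewrite spec_ss_rev coefMX coefC.
rewrite /weight -sumrN; apply: eq_bigr => k _.
by rewrite spec_ss_fwd coefN coefMX coefC mulrN.
Qed.

(* A binomial combination of the p_k has at most one reaction of nonzero
   weight: two of them would give three distinct monomials k_r^-, k_r^+, k_r'^-. *)
Lemma binomial_weight (a : 'I_n -> R) r r' :
  is_binomial (\sum_k a k * ss_poly reac prod k) -> r != r' ->
  weight a r != 0 -> weight a r' = 0.
Proof.
move=> binom rr' w_r; apply/eqP; apply: contraTT binom => w_r'.
rewrite /is_binomial -ltnNge.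
have [_ [rev_r fwd_r]] := spec_ss_combination (a := a) r (erefl _).
have [_ [rev_r' _]] := spec_ss_combination (a := a) r' (erefl _).
apply: (three_rate_monomials (rev_var_rate r) (fwd_var_rate r) (rev_var_rate r')).
- by rewrite eq_sym fwd_rev_var_neq.
- by rewrite rev_var_inj.
- exact: fwd_rev_var_neq.
- by rewrite rev_r.
- by rewrite fwd_r oppr_eq0.
- by rewrite rev_r'.
Qed.

(* If the steady-state ideal is generated by binomials then C is row full: for
   each r, a binomial generator q = sum_k a_k p_k with weight a r != 0 exists,
   and by binomial_weight its weight vector is a multiple of e_r. *)
Lemma row_full_unconditionally_binomial :
  rcrn_wf reac prod -> unconditionally_binomial reac prod -> row_full Cmx.
Proof.
move=> [complexes_differ _] [S [S_binom S_gen]]; apply/row_full_coefP => r.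
have [k0 Ck0r] : exists k0, Cmx k0 r != 0.
  have [k | reac_prod] := pickP (fun k => reac r k != prod r k).
    by exists k; rewrite CmxE intr_eq0 subr_eq0 eqz_nat.
  case: (complexes_differ r); apply: functional_extensionality => k.
  exact/eqP/negbFE/reac_prod.
have [l [lS p_k0]] : in_ideal S (ss_poly reac prod k0).
  by apply/S_gen/in_ideal_gen; exists k0.
have S_comb x : x \in l -> exists a : 'I_n -> R, x.2 = \sum_k a k * ss_poly reac prod k.
  by move=> xl; apply/in_ideal_fin/S_gen/in_ideal_gen/lS.
have l0 : {in l, forall x, (spec (rev_var r) x.2)`_0 = 0}.
  by move=> x /S_comb [a ->]; have [] := spec_ss_combination (a := a) r (erefl _).
have [x xl x1] : exists2 x, x \in l & (spec (rev_var r) x.2)`_1 != 0.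
  apply/hasP; apply: contraNT Ck0r => /hasPn l1.
  have [_] := spec_combination (s := l) (g := snd) fst (rev_var_rate r) l0.
  rewrite -p_k0 spec_ss_rev coefMX coefC /= => ->.
  by rewrite big1_seq // => y /l1 /negbNE /eqP ->; rewrite mulr0.
have [a xE] := S_comb x xl.
have [_ [x_rev _]] := spec_ss_combination r xE.
have w_r : weight a r != 0 by rewrite -x_rev.
exists (fun k => base_value (a k) / weight a r) => r'.
have -> : \sum_k base_value (a k) / weight a r * Cmx k r' = weight a r' / weight a r.
  by rewrite /weight mulr_suml; apply: eq_bigr => k _; rewrite mulrAC.
have [<- | rr'] := eqVneq r r'; first by rewrite divff.
by rewrite (binomial_weight _ rr' w_r) ?mul0r // -xE; apply/S_binom/lS.
Qed.

Lemma cmono_monomial y : exists mm : 'X_{1..N}, cmono m y = 'X_[mm].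
Proof.
rewrite /cmono; elim/big_ind: _ => [|_ _ [m1 ->] [m2 ->]|k _].
- by exists 0%MM; rewrite mpolyX0.
- by exists (m1 + m2)%MM; rewrite mpolyXD.
- by rewrite /xvar mpolyXn; eexists.
Qed.

Lemma binom_r_binomial r : is_binomial (binom_r reac prod r).
Proof.
rewrite /is_binomial /binom_r /kfw /krv.
have [m1 ->] := cmono_monomial (reac r); have [m2 ->] := cmono_monomial (prod r).
rewrite -!mpolyXD.
set a := (_ + m1)%MM; set b := (_ + m2)%MM.
suff supp_ab : {subset msupp (- 'X_[a] + 'X_[b] : R) <= [:: a; b]}.
  exact: uniq_leq_size (msupp_uniq _) supp_ab.
move=> x /msuppD_le; rewrite mem_cat (perm_mem (msuppN _)) !msuppX !inE.
by case/orP => ->; rewrite ?orbT.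
Qed.

(* If C is row full then each b_r = sum_k a_rk p_k lies in the steady-state
   ideal, and each p_k = sum_r c_kr b_r lies in the ideal of the b_r: the b_r
   are binomial generators. *)
Lemma unconditionally_binomial_row_full :
  row_full Cmx -> unconditionally_binomial reac prod.
Proof.
move/row_full_coefP => C_inv; exists (fun q => exists r, q = binom_r reac prod r).
split => [q [r ->] | p]; first exact: binom_r_binomial.
have CmxC k r : ((coef reac prod k r)%:~R : R) = (Cmx k r)%:MP by rewrite CmxE rmorph_int.
split; apply: in_ideal_sub => q; last first.
  move=> [k ->]; apply: in_ideal_sum => r.
  by apply/in_idealM/in_ideal_gen; exists r.
move=> [r ->]; have [a a_inv] := C_inv r.
have -> : binom_r reac prod r = \sum_k (a k)%:MP * ss_poly reac prod k.
  under eq_bigr do rewrite mulr_sumr; rewrite exchange_big /=.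
  under eq_bigr => r' _.
    under eq_bigr do rewrite CmxC mulrA -rmorphM.
    rewrite -mulr_suml -rmorph_sum a_inv.
  over.
  rewrite (bigD1 r) //= eqxx rmorph1 mul1r big1 ?addr0 // => r' r'r.
  by rewrite eq_sym (negbTE r'r) rmorph0 mul0r.
apply: in_ideal_sum => k; apply/in_idealM/in_ideal_gen.
by exists k.
Qed.

Lemma unconditionally_binomial_iff : rcrn_wf reac prod ->
  unconditionally_binomial reac prod <-> row_full Cmx.
Proof.
move=> wf; split; first exact: row_full_unconditionally_binomial.
exact: unconditionally_binomial_row_full.
Qed.
End Binomiality.

Theorem mainTheorem1 (n m : nat) (reac prod : 'I_m -> 'I_n -> nat)
  (Hwf : rcrn_wf reac prod) (ord : seq 'I_m)
  (Hord : perm_eq ord (enum 'I_m)) :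
  (exists st', alg_run ord (init_state reac prod) st') /\
  (forall st', alg_run ord (init_state reac prod) st' ->
     (returns_UB st'.1 <-> unconditionally_binomial reac prod)).
Proof.
split; first exact: alg_run_exists.
move=> st' run; apply: iff_trans (alg_run_returns_UB Hord run) _.
exact: iff_sym (unconditionally_binomial_iff Hwf).
Qed.
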